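(* Let $k \in \mathbb{N}$ with $k \geq 2$. Then $$q(k) < \begin{cases} \frac{k}{3} & \text{if } k \bmod 3 = 0,\\ \left\lceil\frac{k}{2}\right\rceil & \text{otherwise,}\end{cases}$$ i.e. no index $q$ at least this value is admissible.
   Context: For a graph $G$ with an edge-colouring $f\colon E(G)\to\{1,\dots,k\}$ and $1\le j\le k$: $e_j[v]$ is the number of edges coloured $j$ in the subgraph induced by the closed neighbourhood $N[v]$ of $v$, and $\deg_j(v)$ is the number of edges coloured $j$ incident to $v$. Given a strictly increasing sequence of positive integers $(a_1,\dots,a_k)$, a $d$-regular graph $G$ with $d=\sum_j a_j$ is an $(a_1,\dots,a_k)$-flip graph if there is an edge-colouring with colours $\{1,\dots,k\}$ such that $\deg_j(v)=a_j$ for all vertices $v$ and all $j$, and $e_k[v]<e_{k-1}[v]<\dots<e_1[v]$ for every vertex $v$; the sequence is then a $k$-flip sequence. Call an index $q\in\{1,\dots,k-1\}$ admissible if there exists $h\in\mathbb{N}$ such that for every $N\in\mathbb{N}$ there is a $k$-flip sequence $(a_1,\dots,a_k)$ with $a_q=h$ and $a_k>N$; $q(k)$ denotes the largest admissible index. *)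

From mathcomp Require Import all_boot.
Set Implicit Arguments. Unset Strict Implicit. Unset Printing Implicit Defensive.

Definition simple_graph (T : finType) (adj : rel T) : Prop :=
  (forall x y, adj x y = adj y x) /\ (forall x, ~~ adj x x).

Definition cnbhd (T : finType) (adj : rel T) (v : T) : {set T} :=
  [set u | (u == v) || adj v u].

Definition edge_colouring (T : finType) (adj : rel T) (k : nat)
  (f : T -> T -> nat) : Prop :=
  forall x y, adj x y -> f x y = f y x /\ 1 <= f x y <= k.

Definition deg_col (T : finType) (adj : rel T) (f : T -> T -> nat)
  (j : nat) (v : T) : nat :=
  #|[set u | adj v u && (f v u == j)]|.

Definition e_col (T : finType) (adj : rel T) (f : T -> T -> nat)
  (j : nat) (v : T) : nat :=
  #|[set s : {set T} | [exists x, exists y,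
      [&& s == [set x; y], adj x y, x \in cnbhd adj v, y \in cnbhd adj v
        & f x y == j]]]|.

(* G is an (a_1,...,a_k)-flip graph (sequence given as a : nat -> nat,
   only indices 1..k matter). *)
Definition flip_graph (T : finType) (adj : rel T) (k : nat) (a : nat -> nat)
  : Prop :=
  simple_graph adj /\
  (forall v, #|[set u | adj v u]| = \sum_(1 <= j < k.+1) a j) /\
  exists f : T -> T -> nat,
    edge_colouring adj k f /\
    (forall v j, 1 <= j <= k -> deg_col adj f j v = a j) /\
    (forall v j, 1 <= j < k -> e_col adj f j.+1 v < e_col adj f j v).

Definition pos_strict_incr (k : nat) (a : nat -> nat) : Prop :=
  (forall j, 1 <= j <= k -> 0 < a j) /\
  (forall j, 1 <= j < k -> a j < a j.+1).

Definition flip_sequence (k : nat) (a : nat -> nat) : Prop :=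
  pos_strict_incr k a /\
  exists (T : finType) (adj : rel T), 0 < #|T| /\ flip_graph adj k a.

Definition admissible (k q : nat) : Prop :=
  1 <= q <= k.-1 /\
  exists h : nat, forall N : nat,
    exists a : nat -> nat, flip_sequence k a /\ a q = h /\ N < a k.

Definition q_bound (k : nat) : nat :=
  if k %% 3 == 0 then k %/ 3 else uphalf k.

From mathcomp Require Import all_boot zify.
Set Implicit Arguments. Unset Strict Implicit. Unset Printing Implicit Defensive.

(* Fix 0 < q < k with k <= 3q, let s = a_1 + ... + a_q, and call an edge small if
   its colour is at most q and large otherwise.  Since e_j[v] decreases in j, N[v]
   spans at most (k - q) e_q[v] <= 2 (e_1[v] + ... + e_q[v]) large edges, i.e. at
   most twice as many large as small edges.  Sum this over all v, counting ordered
   pairs, and call a triangle v x y with small base x y and large sides v x, v y a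
   cherry at v.  A small edge of N[v] is either the base of the cherry at v or has
   an endpoint u with v = u or u v small; there are at most n (s + 1) s such
   configurations per endpoint.  A large edge x y of N[v] is either incident to v,
   which happens n (a_(q+1) + ... + a_k) times, or a side of a cherry whose base
   contains v, and each cherry gives two of these.  Hence
   n (a_(q+1) + ... + a_k) <= 4 n (s + 1) s, so a_k <= 4 (q a_q + 1) q a_q: with
   a_q fixed, a_k stays bounded and q is not admissible.  Finally q >= q_bound k
   forces k <= 3q. *)

Lemma card_set_sum (T : finType) (P : pred T) : #|[set x | P x]| = \sum_x (P x : nat).
Proof. by rewrite -sum1dep_card big_mkcond. Qed.

Lemma sum_nat_range_eq (b : bool) (c m n : nat) :
  \sum_(m <= j < n) (b && (c == j) : nat) = b && (m <= c < n).
Proof.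
case: b => /=; last by rewrite big1.
by under eq_bigr do rewrite eq_sym; rewrite -big_mkcond big_nat1_eq.
Qed.

Lemma homo_leq_itv (r : rel nat) (g : nat -> nat) (m n : nat) :
  reflexive r -> transitive r -> (forall j, m <= j < n -> r (g j) (g j.+1)) ->
  {in [pred j | m <= j <= n] &, {homo g : i j / i <= j >-> r i j}}.
Proof.
move=> r_refl r_trans g_step; apply: homo_leq_in => //.
  move=> i j /[!inE] /andP[mi _] /andP[_ jn] l /andP[il lj].
  by rewrite inE (leq_trans mi (ltnW il)) (leq_trans (ltnW lj) jn).
by move=> i /[!inE] /andP[mi _] /andP[_ iltn]; apply: g_step; rewrite mi.
Qed.

Lemma sum_tail_le_double_head (e : nat -> nat) (k q : nat) :
  1 <= q <= k -> k <= 3 * q ->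
  {in [pred j | 1 <= j <= k] &, {homo e : i j / i <= j >-> i >= j}} ->
  \sum_(q.+1 <= j < k.+1) e j <= 2 * \sum_(1 <= j < q.+1) e j.
Proof.
move=> /andP[q_gt0 q_le_k] k_le_3q e_noninc.
have tail : \sum_(q.+1 <= j < k.+1) e j <= \sum_(q.+1 <= j < k.+1) e q.
  rewrite big_nat_cond [leqRHS]big_nat_cond.
  apply: leq_sum => j /andP[/andP[qj jk] _]; apply: e_noninc; rewrite ?inE; lia.
have head : \sum_(1 <= j < q.+1) e q <= \sum_(1 <= j < q.+1) e j.
  rewrite big_nat_cond [leqRHS]big_nat_cond.
  apply: leq_sum => j /andP[/andP[j1 jq] _]; apply: e_noninc; rewrite ?inE; lia.
rewrite !sum_nat_const_nat subSS in tail head.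
apply: (leq_trans tail); apply: leq_trans (leq_mul (leqnn 2) head); rewrite mulnA.
by rewrite leq_mul2r; apply/orP; right; lia.
Qed.

Section EdgeCount.
Variable T : finType.

Definition edge_count (R : rel T) : nat :=
  #|[set s : {set T} | [exists x, exists y, (s == [set x; y]) && R x y]]|.

Lemma double_edge_count (R : rel T) : symmetric R -> irreflexive R ->
  \sum_x \sum_y (R x y : nat) = 2 * edge_count R.
Proof.
move=> RC Rirr.
have -> : \sum_x \sum_y (R x y : nat) = \sum_(p : T * T | R p.1 p.2) 1.
  by rewrite pair_big [RHS]big_mkcond.
rewrite /edge_count; set E := [set s : {set T} | _].
rewrite (partition_big (fun p : T * T => [set p.1; p.2]) (mem E)) /=; last first.
  move=> [x y] /= Rxy; rewrite inE.
  by apply/existsP; exists x; apply/existsP; exists y; rewrite eqxx Rxy.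
rewrite -sum1_card big_distrr /=; apply: eq_bigr => s /[!inE].
move=> /existsP[x /existsP[y /andP[/eqP -> Rxy]]].
have x_ne_y : x != y by apply: contraTneq Rxy => ->; rewrite Rirr.
rewrite muln1 (eq_bigl (mem [set (x, y); (y, x)])).
  by rewrite sum1_card cards2 xpair_eqE (negPf x_ne_y).
move=> [x' y'] /=; rewrite !inE !xpair_eqE; apply/idP/idP.
  move=> /andP[Rxy' /eqP E'].
  have x'_ne_y' : x' != y' by apply: contraTneq Rxy' => ->; rewrite Rirr.
  have : x' \in [set x; y] by rewrite -E' !inE eqxx.
  have : y' \in [set x; y] by rewrite -E' !inE eqxx orbT.
  rewrite !inE => /orP[]/eqP y'E /orP[]/eqP x'E;
    by move: x'_ne_y'; rewrite x'E y'E !eqxx ?orbT.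
by case/orP=> /andP[/eqP-> /eqP->]; [rewrite Rxy eqxx | rewrite RC Rxy setUC eqxx].
Qed.
End EdgeCount.

Lemma leq_bool_add3 (b b1 b2 b3 : bool) : (b -> [|| b1, b2 | b3]) -> b <= b1 + b2 + b3.
Proof. by case: b; case: b1; case: b2; case: b3 => // /(_ isT). Qed.

Lemma leq_add3_bool (b b1 b2 b3 : bool) : (b1 -> b) -> (b2 -> b) -> (b3 -> b) ->
  ~~ (b1 && b2) -> ~~ (b1 && b3) -> ~~ (b2 && b3) -> b1 + b2 + b3 <= b.
Proof. by case: b; case: b1; case: b2; case: b3 => // /(_ isT). Qed.

Section TripleSums.
Variable T : finType.
Implicit Types F G : T -> T -> T -> nat.

Lemma leq_sum3 F G : (forall v x y, F v x y <= G v x y) ->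
  \sum_v \sum_x \sum_y F v x y <= \sum_v \sum_x \sum_y G v x y.
Proof. by move=> FG; do 3 (apply: leq_sum => ? _). Qed.

Lemma sum3D F G :
  \sum_v \sum_x \sum_y (F v x y + G v x y)
  = \sum_v \sum_x \sum_y F v x y + \sum_v \sum_x \sum_y G v x y.
Proof.
rewrite -big_split; apply: eq_bigr => v _; rewrite -big_split; apply: eq_bigr => x _.
by rewrite -big_split.
Qed.

End TripleSums.

Section FlipCounting.
Variables (T : finType) (adj : rel T) (k q : nat) (a : nat -> nat) (f : T -> T -> nat).
Hypothesis adj_simple : simple_graph adj.
Hypothesis f_col : edge_colouring adj k f.
Hypothesis deg_colE : forall v j, 1 <= j <= k -> deg_col adj f j v = a j.
Hypothesis e_col_decr : forall v j, 1 <= j < k -> e_col adj f j.+1 v < e_col adj f j v.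
Hypothesis q_gt0 : 0 < q.
Hypothesis q_lt_k : q < k.
Hypothesis k_le_3q : k <= 3 * q.

Let adjC : symmetric adj := adj_simple.1.
Let adjI x : adj x x = false := negbTE (adj_simple.2 x).
Let fC {x y} : adj x y -> f x y = f y x := fun xy => (f_col xy).1.
Let f_range {x y} : adj x y -> 1 <= f x y <= k := fun xy => (f_col xy).2.

Definition small x y := adj x y && (f x y <= q).
Definition large x y := adj x y && (q < f x y).
Definition nbhd_edge v x y := [&& adj x y, x \in cnbhd adj v & y \in cnbhd adj v].
Definition cherry v x y := [&& small x y, large v x & large v y].
Definition small_cnbhd x v := (v == x) || small x v.

Let s := \sum_(1 <= j < q.+1) a j.
Let l := \sum_(q.+1 <= j < k.+1) a j.

Lemma sum_deg_col x m n :
  \sum_(m <= j < n) deg_col adj f j x = \sum_y (adj x y && (m <= f x y < n)).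
Proof.
under eq_bigr do rewrite /deg_col card_set_sum.
by rewrite exchange_big; apply: eq_bigr => y _; apply: sum_nat_range_eq.
Qed.

Lemma sum_a_colour_range x m n : 0 < m -> n <= k.+1 ->
  \sum_(m <= j < n) a j = \sum_y (adj x y && (m <= f x y < n)).
Proof.
move=> m_gt0 n_le; rewrite -sum_deg_col; apply: eq_big_nat => j /andP[mj jn].
by rewrite deg_colE //; lia.
Qed.

Lemma small_degree x : \sum_y (small x y : nat) = s.
Proof.
rewrite /s (sum_a_colour_range x) //; last lia.
apply: eq_bigr => y _; rewrite /small.
by case xy: (adj x y); rewrite //= (andP (f_range xy)).1.
Qed.

Lemma large_degree x : \sum_y (large x y : nat) = l.
Proof.
rewrite /l (sum_a_colour_range x) //.
apply: eq_bigr => y _; rewrite /large.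
by case xy: (adj x y); rewrite //= ltnS (andP (f_range xy)).2 andbT.
Qed.

Lemma nbhd_edgeC v x y : nbhd_edge v x y = nbhd_edge v y x.
Proof. by rewrite /nbhd_edge adjC [(x \in _) && _]andbC. Qed.

Lemma e_colE j v :
  e_col adj f j v = edge_count (fun x y => nbhd_edge v x y && (f x y == j)).
Proof.
apply: eq_card => E; rewrite !inE; apply: eq_existsb => x.
by apply: eq_existsb => y; rewrite /nbhd_edge -!andbA.
Qed.

Lemma sum_e_col v m n :
  \sum_x \sum_y (nbhd_edge v x y && (m <= f x y < n) : nat)
  = 2 * \sum_(m <= j < n) e_col adj f j v.
Proof.
rewrite big_distrr /=.
under [RHS]eq_bigr => j _.
  rewrite e_colE -double_edge_count.
  - over.
  - move=> x y; rewrite nbhd_edgeC.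
    by case/boolP: (nbhd_edge v y x) => //= /and3P[yx _ _]; rewrite (fC yx).
  - by move=> x; rewrite /nbhd_edge adjI.
rewrite [RHS]exchange_big; apply: eq_bigr => x _.
by rewrite [RHS]exchange_big; apply: eq_bigr => y _; rewrite sum_nat_range_eq.
Qed.

Lemma nbhd_large_le_double_small v :
  \sum_x \sum_y (nbhd_edge v x y && (q < f x y) : nat)
  <= 2 * \sum_x \sum_y (nbhd_edge v x y && (f x y <= q) : nat).
Proof.
have -> : \sum_x \sum_y (nbhd_edge v x y && (q < f x y) : nat)
        = \sum_x \sum_y (nbhd_edge v x y && (q.+1 <= f x y < k.+1) : nat).
  apply: eq_bigr => x _; apply: eq_bigr => y _.
  by case/boolP: (nbhd_edge v x y) => //= /and3P[/f_range/andP[_ fk] _ _]; rewrite ltnS fk andbT.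
have -> : \sum_x \sum_y (nbhd_edge v x y && (f x y <= q) : nat)
        = \sum_x \sum_y (nbhd_edge v x y && (1 <= f x y < q.+1) : nat).
  apply: eq_bigr => x _; apply: eq_bigr => y _.
  by case/boolP: (nbhd_edge v x y) => //= /and3P[/f_range/andP[-> _] _ _].
rewrite !sum_e_col leq_pmul2l //; apply: sum_tail_le_double_head; rewrite ?q_gt0 ?(ltnW q_lt_k) //.
exact: (homo_leq_itv (r := geq) (fun n => leqnn n)
  (fun m n p le_nm le_pn => leq_trans le_pn le_nm) (fun j jk => ltnW (e_col_decr v jk))).
Qed.

Lemma small_nbhd_edge_cases v x y :
  nbhd_edge v x y -> f x y <= q ->
  [|| cherry v x y, small_cnbhd x v && small x y | small_cnbhd y v && small y x].
Proof.
move=> /and3P[xy]; rewrite !inE => vx vy fxy_le.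
have sxy : small x y by rewrite /small xy.
have syx : small y x by rewrite /small adjC xy -(fC xy).
rewrite /cherry /small_cnbhd sxy syx /= !andbT.
have [<- | /negPf v_ne_x] := eqVneq v x; first by rewrite /= orbT.
have [<- | /negPf v_ne_y] := eqVneq v y; first by rewrite /= !orbT.
rewrite eq_sym v_ne_x /= in vx; rewrite eq_sym v_ne_y /= in vy.
rewrite /small /large [adj x v]adjC [adj y v]adjC vx vy -(fC vx) -(fC vy) /=.
by case: (leqP (f v x) q); case: (leqP (f v y) q).
Qed.

Lemma large_nbhd_edge_cases v x y :
  ((v == x) && large x y) + cherry x v y + cherry y v x
  <= nbhd_edge v x y && (q < f x y).
Proof.
rewrite /cherry /small /large /nbhd_edge !inE; apply: leq_add3_bool.
- by case/andP=> /eqP<- /andP[-> ->]; rewrite eqxx orbT.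
- by case/and3P=> /andP[-> _] /andP[xv _] /andP[-> ->]; rewrite [adj v x]adjC xv !orbT.
- case/and3P=> /andP[-> _] /andP[yv _] /andP[yx fyx].
  by rewrite [adj x y]adjC yx -(fC yx) fyx [adj v y]adjC yv !orbT.
- by apply/negP=> /andP[/andP[/eqP<- _] /and3P[_ /andP[]]]; rewrite adjI.
- by apply/negP=> /andP[/andP[/eqP<- _] /and3P[/andP[]]]; rewrite adjI.
- apply/negP=> /andP[/and3P[/andP[vy fvy] _ _] /and3P[_ /andP[_ fyv] _]].
  by move: (leq_ltn_trans fvy fyv); rewrite (fC vy) ltnn.
Qed.

Lemma sum_small_cnbhd x : \sum_v (small_cnbhd x v : nat) = s.+1.
Proof.
rewrite (bigD1 x) //= /small_cnbhd eqxx -(small_degree x) [X in _ = X.+1](bigD1 x) //=.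
by rewrite /small adjI; congr _.+1; apply: eq_bigr => v /negPf ->.
Qed.

Lemma large_degree_le : 0 < #|T| -> l <= 4 * (s.+1 * s).
Proof.
move=> T_gt0.
set TL := \sum_v \sum_x \sum_y (nbhd_edge v x y && (q < f x y) : nat).
set TS := \sum_v \sum_x \sum_y (nbhd_edge v x y && (f x y <= q) : nat).
set TC := \sum_v \sum_x \sum_y (cherry v x y : nat).
set TB := \sum_v \sum_x \sum_y (small_cnbhd x v && small x y : nat).
have TL_le : TL <= 2 * TS.
  by rewrite big_distrr; apply: leq_sum => v _; apply: nbhd_large_le_double_small.
have TS_le : TS <= TC + TB + TB.
  have TB_sym : \sum_v \sum_x \sum_y (small_cnbhd y v && small y x : nat) = TB.
    by apply: eq_bigr => v _; rewrite exchange_big.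
  rewrite -{2}TB_sym -!sum3D; apply: leq_sum3 => v x y.
  apply: leq_bool_add3 => /andP[]; exact: small_nbhd_edge_cases.
have TL_ge : #|T| * l + TC + TC <= TL.
  have diag : \sum_v \sum_x \sum_y ((v == x) && large x y : nat) = #|T| * l.
    transitivity (\sum_(v : T) l); last by rewrite sum_nat_const.
    apply: eq_bigr => v _; rewrite (bigD1 v) //= eqxx large_degree [X in _ + X]big1 ?addn0 //.
    by move=> x x_ne_v; apply: big1 => y _; rewrite eq_sym (negPf x_ne_v).
  have TC1 : \sum_v \sum_x \sum_y (cherry x v y : nat) = TC by rewrite exchange_big.
  have TC2 : \sum_v \sum_x \sum_y (cherry y v x : nat) = TC.
    by rewrite -TC1; apply: eq_bigr => v _; rewrite exchange_big.
  rewrite -diag -{1}TC1 -TC2 -!sum3D; apply: leq_sum3 => v x y.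
  exact: large_nbhd_edge_cases.
have TB_eq : TB = #|T| * (s.+1 * s).
  rewrite /TB exchange_big /=.
  transitivity (\sum_(x : T) s.+1 * s); last by rewrite sum_nat_const.
  apply: eq_bigr => x _; rewrite -(sum_small_cnbhd x) -(small_degree x) big_distrlr.
  by apply: eq_bigr => v _; apply: eq_bigr => y _; rewrite -mulnb.
have : #|T| * l <= #|T| * (4 * (s.+1 * s)).
  move: TL_le TS_le TL_ge TB_eq; rewrite mulnCA.
  set P := #|T| * (s.+1 * s); set N := #|T| * l; lia.
by rewrite leq_pmul2l.
Qed.

End FlipCounting.

Lemma flip_graph_tail_le (T : finType) (adj : rel T) (k q : nat) (a : nat -> nat) :
  flip_graph adj k a -> 0 < #|T| -> 0 < q < k -> k <= 3 * q ->
  \sum_(q.+1 <= j < k.+1) a j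
  <= 4 * ((\sum_(1 <= j < q.+1) a j).+1 * \sum_(1 <= j < q.+1) a j).
Proof.
move=> [G_simple [_ [f [f_col [deg_colE e_col_decr]]]]] T_gt0 /andP[q_gt0 q_lt_k] k_le_3q.
exact: large_degree_le G_simple f_col deg_colE e_col_decr q_gt0 q_lt_k k_le_3q T_gt0.
Qed.

Lemma flip_sequence_last_le (k q : nat) (a : nat -> nat) :
  flip_sequence k a -> 0 < q < k -> k <= 3 * q ->
  a k <= 4 * ((q * a q).+1 * (q * a q)).
Proof.
move=> [[_ a_incr] [T [adj [T_gt0 G_flip]]]] q_range k_le_3q.
have a_k_le : a k <= \sum_(q.+1 <= j < k.+1) a j.
  by rewrite big_nat_recr /= ?leq_addl //; lia.
have head_le : \sum_(1 <= j < q.+1) a j <= q * a q.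
  apply: (@leq_trans (\sum_(1 <= j < q.+1) a q)); last by rewrite sum_nat_const_nat subn1.
  have a_mono := homo_leq_itv leqnn leq_trans (fun j jk => ltnW (a_incr j jk)).
  rewrite big_nat_cond [leqRHS]big_nat_cond; apply: leq_sum => j /andP[j_range _].
  by apply: a_mono; rewrite ?inE; lia.
apply: leq_trans a_k_le (leq_trans (flip_graph_tail_le G_flip T_gt0 q_range k_le_3q) _).
by rewrite leq_mul2l /= leq_mul.
Qed.

Lemma q_bound_le_3q (k q : nat) : q_bound k <= q -> k <= 3 * q.
Proof. by rewrite /q_bound uphalfE; case: ifP => /eqP k_mod3; lia. Qed.

Theorem theorem4p2 (k : nat) : 2 <= k ->
  forall q : nat, admissible k q -> q < q_bound k.
Proof.
move=> _ q [q_range [h a_unbounded]].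
rewrite ltnNge; apply/negP => /q_bound_le_3q k_le_3q.
have q_range' : 0 < q < k by lia.
have [a [a_flip [a_q a_k_large]]] := a_unbounded (4 * ((q * h).+1 * (q * h))).
by move: a_k_large; rewrite -a_q ltnNge (flip_sequence_last_le a_flip q_range' k_le_3q).
Qed.
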